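(* Let $H$ be an undirected connected planarly embedded graph whose perimeter is a simple polygonal curve, such that all interior vertices have degree at least 6 and all interior faces are triangles. For a boundary vertex $x\in\partial H$ let $\deg(x)\ge 2$ denote its degree. Then $$\sum_{x\in\partial H}\max(4-\deg(x),0)\ge 6.$$ *)

(* A planarly embedded connected graph is encoded
   combinatorially as a rotation system (combinatorial map):
   - darts D (one dart per edge-direction, i.e. edge-vertex incidence),
   - alpha : fixed-point-free involution pairing the two darts of an edge,
   - sigma : rotation of darts around their common vertex (the embedding).
   Faces are the orbits of phi := sigma \o alpha; planarity (genus 0) of a
   connected map is Euler's formula V - E + F = 2. *)
From mathcomp Require Import all_boot all_fingroup.

Set Implicit Arguments.
Unset Strict Implicit.
Unset Printing Implicit Defensive.

Section RotationSystem.
Variables (D : finType) (alpha sigma : {perm D}).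

Definition phi (x : D) : D := sigma (alpha x).

Definition vertex_of (x : D) : {set D} := [set y | fconnect sigma x y].
Definition edge_of (x : D) : {set D} := [set y | fconnect alpha x y].
Definition face_of (x : D) : {set D} := [set y | fconnect phi x y].

Definition vertices : {set {set D}} := [set vertex_of x | x : D].
Definition edges : {set {set D}} := [set edge_of x | x : D].
Definition faces : {set {set D}} := [set face_of x | x : D].

(* degree of a vertex = number of incident darts (= neighbours, graph simple) *)
Definition deg (v : {set D}) : nat := #|v|.

Definition edge_involution : Prop :=
  forall x, alpha (alpha x) = x /\ alpha x != x.

Definition map_connected : Prop :=
  forall x y, connect [rel a b | (b == alpha a) || (b == sigma a)] x y.

(* the underlying graph is simple: no loops, no multiple edges *)
Definition simple_graph : Prop :=
  (forall x, alpha x \notin vertex_of x) /\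
  (forall x y, y \in vertex_of x -> x != y ->
     vertex_of (alpha x) != vertex_of (alpha y)).

Definition planar : Prop := #|vertices| + #|faces| = #|edges| + 2.

Definition outer_face (d0 : D) : {set D} := face_of d0.

Definition simple_perimeter (d0 : D) : Prop :=
  3 <= #|outer_face d0| /\ {in outer_face d0 &, injective vertex_of}.

Definition interior_faces_triangles (d0 : D) : Prop :=
  forall x, x \notin outer_face d0 -> #|face_of x| = 3.

Definition boundary_vertices (d0 : D) : {set {set D}} :=
  [set vertex_of x | x in outer_face d0].

Definition interior_deg_ge6 (d0 : D) : Prop :=
  forall x, vertex_of x \notin boundary_vertices d0 -> 6 <= deg (vertex_of x).

End RotationSystem.

From mathcomp Require Import all_boot all_fingroup.
From mathcomp Require Import zify.

Set Implicit Arguments.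
Unset Strict Implicit.
Unset Printing Implicit Defensive.

(* Count the darts three ways.  With b the length of the perimeter, i the
   number of interior vertices and S the total degree of the boundary
   vertices: around faces 2E = b + 3(F - 1), around vertices 2E >= S + 6i,
   and V = b + i because the perimeter is simple.  Substituting into Euler's
   formula V + F = E + 2 gives S <= 4b - 6, while the sum in the statement
   is at least 4b - S. *)

Section FconnectOrbits.
Variables (T : finType) (f : T -> T).
Hypothesis f_inj : injective f.

Lemma fconnect_orbit_eq x y :
  fconnect f x y -> [set z | fconnect f x z] = [set z | fconnect f y z].
Proof.
move=> cxy; apply/setP => z; rewrite !inE; apply/idP/idP => [cxz | cyz].
  by apply: connect_trans cxz; rewrite fconnect_sym.
exact: connect_trans cxy cyz.
Qed.

Lemma partition_fconnect_orbits :
  partition [set [set y | fconnect f x y] | x : T] [set: T].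
Proof.
have -> : [set [set y | fconnect f x y] | x : T] =
          equivalence_partition (fconnect f) [set: T].
  apply/setP => A; apply/imsetP/imsetP => -[x _ ->]; exists x => //;
    by apply/setP => y; rewrite !inE.
apply: equivalence_partitionP => x y z _ _ _; split; first exact: connect0.
by move=> /fconnect_orbit_eq/setP/(_ z); rewrite !inE.
Qed.

Lemma sum_card_fconnect_orbits :
  \sum_(A in [set [set y | fconnect f x y] | x : T]) #|A| = #|T|.
Proof. by rewrite -cardsT; apply/esym/card_partition/partition_fconnect_orbits. Qed.

End FconnectOrbits.

Lemma leq_sum_subn (I : finType) (A : {pred I}) (a : nat) (F : I -> nat) :
  a * #|A| <= \sum_(i in A) (a - F i) + \sum_(i in A) F i.
Proof.
rewrite -big_split /= mulnC -sum_nat_const.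
by apply: leq_sum => i _; rewrite addnC -leq_subLR.
Qed.

Section RotationSystemCounts.
Variables (D : finType) (alpha sigma : {perm D}) (d0 : D).

Local Notation B := (boundary_vertices alpha sigma d0).
Local Notation F0 := (outer_face alpha sigma d0).

Lemma phi_inj : injective (phi alpha sigma).
Proof. by move=> x y /perm_inj /perm_inj. Qed.

Lemma card_darts_vertices : #|D| = \sum_(v in vertices sigma) deg v.
Proof. exact/esym/sum_card_fconnect_orbits/perm_inj. Qed.

Lemma edge_of_involution :
  edge_involution alpha -> forall x, edge_of alpha x = [set x; alpha x].
Proof.
move=> inv x; apply/setP => y; rewrite !inE; apply/idP/idP; last first.
  by case/orP => /eqP ->; [exact: connect0 | exact: fconnect1].
move=> /iter_findex <-; elim: (findex _ _ _) => [|k IH] /=; first by rewrite eqxx.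
by case/orP: IH => /eqP ->; rewrite ?(proj1 (inv x)) eqxx ?orbT.
Qed.

Lemma card_darts_edges : edge_involution alpha -> #|D| = 2 * #|edges alpha|.
Proof.
move=> inv; rewrite -(sum_card_fconnect_orbits (@perm_inj _ alpha)) mulnC.
rewrite -sum_nat_const; apply: eq_bigr => _ /imsetP [x _ ->].
by rewrite -/(edge_of alpha x) edge_of_involution // cards2 eq_sym (proj2 (inv x)).
Qed.

Lemma outer_face_in_faces : F0 \in faces alpha sigma.
Proof. exact: imset_f. Qed.

Lemma card_darts_faces :
  interior_faces_triangles alpha sigma d0 ->
  #|D| + 3 = #|F0| + 3 * #|faces alpha sigma|.
Proof.
move=> tri; rewrite -(sum_card_fconnect_orbits phi_inj) (bigD1 F0) /=;
  last exact: outer_face_in_faces.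
rewrite -addnA (cardsD1 F0) outer_face_in_faces mulnSr; congr (_ + (_ + 3)).
rewrite mulnC -sum_nat_const.
apply: eq_big => [A | _ /andP [/imsetP [x _ ->] xF0]]; first by rewrite !inE andbC.
apply: tri; apply: contra xF0 => x_outer; apply/eqP/esym/fconnect_orbit_eq.
  exact: phi_inj.
by rewrite inE in x_outer.
Qed.

Lemma card_boundary_vertices :
  {in F0 &, injective (vertex_of sigma)} -> #|B| = #|F0|.
Proof. exact: card_in_imset. Qed.

Lemma card_darts_boundary_interior :
  interior_deg_ge6 alpha sigma d0 ->
  \sum_(v in B) deg v + 6 * (#|vertices sigma| - #|B|) <= #|D|.
Proof.
move=> ge6; have BV : B \subset vertices sigma.
  by apply/subsetP => _ /imsetP [x _ ->]; exact: imset_f.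
rewrite card_darts_vertices [leqRHS](big_setID B) /= (setIidPr BV) leq_add2l.
rewrite -(cardsID B (vertices sigma)) (setIidPr BV) addKn mulnC -sum_nat_const.
apply: leq_sum => _ /setDP [/imsetP [x _ ->] xB]; exact: ge6.
Qed.

End RotationSystemCounts.

Theorem lemma8p1 (D : finType) (alpha sigma : {perm D}) (d0 : D) :
  edge_involution alpha ->
  map_connected alpha sigma ->
  simple_graph alpha sigma ->
  planar alpha sigma ->
  simple_perimeter alpha sigma d0 ->
  interior_faces_triangles alpha sigma d0 ->
  interior_deg_ge6 alpha sigma d0 ->
  6 <= \sum_(v in boundary_vertices alpha sigma d0) (4 - deg v).
Proof.
move=> inv _ _ euler [_ injB] tri ge6.
have darts_E := card_darts_edges inv.
have darts_F := card_darts_faces tri.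
have darts_V := card_darts_boundary_interior ge6.
have card_B := card_boundary_vertices injB.
have := leq_sum_subn (boundary_vertices alpha sigma d0) 4 (@deg D).
move: euler; rewrite /planar; lia.
Qed.
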